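(* Let $(X_j)_{j\in\mathbb{Z}^2}$ be i.i.d. Poisson random variables with mean $\lambda>0$, and let $N_n$ be the greedy lattice animal weight of size $n$. There is a constant $\rho>0$ (not depending on $\lambda$) such that for all $y\ge y_0:=(e^3\lambda)\vee\rho$ and all $n\in\mathbb{N}$, $$\mathbb{P}(N_n>yn)\le e^{-yn}.$$
   Context: A lattice animal is a connected subset of $\mathbb{Z}^2$ (nearest-neighbor connectivity) containing the origin; $A(n)$ is the set of lattice animals with $n$ sites. Given $X:\mathbb{Z}^2\to\mathbb{R}$, the weight of $\mathcal{A}\in A(n)$ is $\sum_{k\in\mathcal{A}}X_k$, and $N_n=\max_{\mathcal{A}\in A(n)}\sum_{k\in\mathcal{A}}X_k$. *)

From Stdlib Require Import Reals ZArith List.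
Import ListNotations.
Open Scope R_scope.

Definition site := (Z * Z)%type.
Definition origin : site := (0%Z, 0%Z).
Definition adj (a b : site) : Prop :=
  (Z.abs (fst a - fst b) + Z.abs (snd a - snd b) = 1)%Z.

Inductive reach (A : list site) : site -> Prop :=
| reach_origin : In origin A -> reach A origin
| reach_step : forall a b, reach A a -> In b A -> adj a b -> reach A b.

Definition lattice_animal (n : nat) (A : list site) : Prop :=
  NoDup A /\ length A = n /\ In origin A /\ (forall a, In a A -> reach A a).

Definition weight (X : site -> R) (A : list site) : R :=
  fold_right (fun k s => X k + s) 0 A.

(** "N_n > t", where N_n = max_{A in A(n)} weight X A. *)
Definition Nn_gt (X : site -> R) (n : nat) (t : R) : Prop :=
  exists A, lattice_animal n A /\ weight X A > t.

Definition poisson_pmf (lam : R) (k : nat) : R :=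
  exp (- lam) * lam ^ k / INR (fact k).

(** The box [-n,n]^2, which contains every lattice animal of size n. *)
Definition zrange (n : nat) : list Z :=
  map (fun k => (Z.of_nat k - Z.of_nat n)%Z) (seq 0 (2 * n + 1)).
Definition box (n : nat) : list site :=
  flat_map (fun i => map (fun j => (i, j)) (zrange n)) (zrange n).

Definition site_eq_dec : forall a b : site, {a = b} + {a <> b}.
Proof. decide equality; apply Z.eq_dec. Defined.

(** A configuration on the box: a list of values aligned with [box n];
    it is extended by 0 outside the box (irrelevant for the event). *)
Fixpoint lookup (s : list site) (v : list nat) (k : site) : nat :=
  match s, v with
  | a :: s', x :: v' => if site_eq_dec a k then x else lookup s' v' k
  | _, _ => 0%nat
  end.
Definition cfg (n : nat) (v : list nat) : site -> R :=
  fun k => INR (lookup (box n) v k).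

(** Probability (product of i.i.d. Poisson(lam) marginals) of a configuration. *)
Definition cfg_prob (lam : R) (v : list nat) : R :=
  fold_right (fun x p => poisson_pmf lam x * p) 1 v.
Definition sum_prob (lam : R) (L : list (list nat)) : R :=
  fold_right (fun v s => cfg_prob lam v + s) 0 L.

(* A lattice animal of size n+1 is covered by the sites visited by a nearest-neighbour walk
   of length 2n from the origin (explore it depth first, each new site costing a detour of
   two steps).  Hence {N_{n+1} > y(n+1)} lies in the union, over the 4^(2n) such walks w,
   of the events {S_w >= y(n+1)}, S_w being the total weight on the at most 2n+1 sites
   visited by w.  By the exponential Markov inequality with parameter 2 and the Poisson
   moment generating function E e^(2X) = e^(lam (e^2 - 1)), each of these has probability
   at most e^(-2y(n+1)) e^(lam (e^2 - 1)(2n+1)), and y >= e^3 lam, y >= 60 make the sum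
   at most e^(-y(n+1)). *)

From Stdlib Require Import Reals ZArith List Lia Lra.
Import ListNotations.
Open Scope R_scope.

Inductive dir := East | West | North | South.

Definition step (p : site) (d : dir) : site :=
  let (x, y) := p in
  match d with
  | East => ((x + 1)%Z, y) | West => ((x - 1)%Z, y)
  | North => (x, (y + 1)%Z) | South => (x, (y - 1)%Z)
  end.

Definition opposite (d : dir) : dir :=
  match d with East => West | West => East | North => South | South => North end.

Lemma step_opposite p d : step (step p d) (opposite d) = p.
Proof. destruct p, d; simpl; f_equal; lia. Qed.

Lemma adj_step a b : adj a b -> exists d, b = step a d.
Proof.
  destruct a as [x y], b as [x' y']; unfold adj; simpl; intros H.
  assert (C : ((x' = x + 1 /\ y' = y) \/ (x' = x - 1 /\ y' = y) \/
               (x' = x /\ y' = y + 1) \/ (x' = x /\ y' = y - 1))%Z) by lia.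
  destruct C as [[-> ->]|[[-> ->]|[[-> ->]|[-> ->]]]];
    [now exists East | now exists West | now exists North | now exists South].
Qed.

Fixpoint visited (p : site) (w : list dir) : list site :=
  match w with [] => [p] | d :: w' => p :: visited (step p d) w' end.

Fixpoint endpoint (p : site) (w : list dir) : site :=
  match w with [] => p | d :: w' => endpoint (step p d) w' end.

Lemma visited_start p w : In p (visited p w).
Proof. destruct w; simpl; auto. Qed.

Lemma length_visited p w : length (visited p w) = S (length w).
Proof. revert p; induction w; simpl; auto. Qed.

Lemma in_visited_app x p w1 w2 :
  In x (visited p (w1 ++ w2)) <-> In x (visited p w1) \/ In x (visited (endpoint p w1) w2).
Proof.
  revert p; induction w1 as [|d w1 IH]; intros p; simpl.
  - split; [tauto|]. intros [[<-|[]]|H]; [apply visited_start|exact H].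
  - rewrite IH. tauto.
Qed.

Lemma in_visited_split s p w :
  In s (visited p w) -> exists w1 w2, w = w1 ++ w2 /\ endpoint p w1 = s.
Proof.
  revert p; induction w as [|d w IH]; intros p [<-|H].
  - exists [], []; auto.
  - destruct H.
  - exists [], (d :: w); auto.
  - destruct (IH _ H) as (w1 & w2 & -> & E). exists (d :: w1), w2; auto.
Qed.

(* Witness: insert the back-and-forth move [d; opposite d] at a visit of [s]. *)
Lemma walk_detour p w s d : In s (visited p w) -> exists w',
  length w' = (length w + 2)%nat /\ incl (visited p w) (visited p w') /\
  In (step s d) (visited p w').
Proof.
  intros Hs. destruct (in_visited_split s p w Hs) as (w1 & w2 & -> & E).
  exists (w1 ++ d :: opposite d :: w2). rewrite !length_app; simpl. split; [lia|split].
  - intros x Hx. apply in_visited_app in Hx. apply in_visited_app. rewrite E in *.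
    destruct Hx as [Hx|Hx]; [now left|right]. simpl. rewrite step_opposite. auto.
  - apply in_visited_app. right. rewrite E. simpl. auto.
Qed.

Lemma reach_exit A V b : In origin V -> reach A b ->
  In b V \/ exists s a, In s V /\ In a A /\ ~ In a V /\ adj s a.
Proof.
  intros HO Hr. induction Hr as [H|a b Hr IH Hb Hab]; auto.
  destruct (in_dec site_eq_dec b V) as [h|h]; auto.
  right. destruct IH as [IH|IH]; auto. exists a, b; auto.
Qed.

Definition on_walk (w : list dir) (k : site) : bool :=
  if in_dec site_eq_dec k (visited origin w) then true else false.

Definition unvisited (w : list dir) (A : list site) : list site :=
  filter (fun a => negb (on_walk w a)) A.

Lemma in_unvisited w A a : In a (unvisited w A) <-> In a A /\ ~ In a (visited origin w).
Proof.
  unfold unvisited, on_walk. rewrite filter_In.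
  destruct (in_dec site_eq_dec a (visited origin w)); simpl; intuition discriminate.
Qed.

Lemma incl_unvisited w A : unvisited w A = [] -> incl A (visited origin w).
Proof.
  intros E a Ha. destruct (in_dec site_eq_dec a (visited origin w)) as [h|h]; auto.
  assert (H : In a (unvisited w A)) by (apply in_unvisited; auto). rewrite E in H. destruct H.
Qed.

(* Each detour visits a new site of A, so the number of unvisited sites is a measure. *)
Lemma covering_walk_extension A : NoDup A -> (forall a, In a A -> reach A a) ->
  forall w, exists w', (length w' <= length w + 2 * length (unvisited w A))%nat /\
    incl A (visited origin w').
Proof.
  intros HN HA w. remember (length (unvisited w A)) as k eqn:Ek. revert w Ek.
  induction k as [k IH] using lt_wf_ind; intros w Ek.
  destruct (unvisited w A) as [|b U] eqn:EU.
  { exists w. split; [lia|]. now apply incl_unvisited. }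
  assert (Hb : In b (unvisited w A)) by (rewrite EU; now left).
  apply in_unvisited in Hb as [HbA Hbw].
  destruct (reach_exit A (visited origin w) b (visited_start _ _) (HA b HbA))
    as [Hv|(s & a & Hs & Ha & Haw & Hsa)]; [contradiction|].
  destruct (adj_step s a Hsa) as [d ->].
  destruct (walk_detour origin w s d Hs) as (w2 & Hl & Hincl & Hin).
  assert (Hlt : (length (unvisited w2 A) < k)%nat).
  { subst k. rewrite <- EU. apply (NoDup_incl_length (l := step s d :: unvisited w2 A)).
    - constructor; [now intros []%in_unvisited | apply NoDup_filter, HN].
    - intros x [<-|Hx]; apply in_unvisited; [auto|].
      apply in_unvisited in Hx as [? Hx]. split; auto. }
  destruct (IH _ Hlt w2 eq_refl) as (w' & Hw' & Hc).
  exists w'. split; [lia|exact Hc].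
Qed.

Lemma animal_covering_walk n A : lattice_animal (S n) A ->
  exists w, length w = (2 * n)%nat /\ incl A (visited origin w).
Proof.
  intros (HN & Hlen & HO & HA).
  assert (Hu : (length (unvisited [] A) <= n)%nat).
  { enough (S (length (unvisited [] A)) <= length A)%nat by lia.
    apply (NoDup_incl_length (l := origin :: unvisited [] A)).
    - constructor; [intros [_ []]%in_unvisited; apply visited_start | apply NoDup_filter, HN].
    - intros x [<-|Hx]; [exact HO|]. now apply in_unvisited in Hx. }
  destruct (covering_walk_extension A HN HA []) as (w & Hw & Hc).
  exists (w ++ repeat East (2 * n - length w)). split.
  - rewrite length_app, repeat_length. simpl in Hw. lia.
  - intros a Ha. apply in_visited_app. left. auto.
Qed.

Definition rsum {A} (f : A -> R) (l : list A) : R :=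
  fold_right (fun x s => f x + s) 0 l.

Lemma rsum_app {A} (f : A -> R) l1 l2 : rsum f (l1 ++ l2) = rsum f l1 + rsum f l2.
Proof. induction l1; simpl; [ring | rewrite IHl1; ring]. Qed.

Lemma rsum_ext {A} (f g : A -> R) l : (forall x, In x l -> f x = g x) -> rsum f l = rsum g l.
Proof. induction l; simpl; intros H; [reflexivity|]. rewrite H, IHl; auto. Qed.

Lemma rsum_le {A} (f g : A -> R) l : (forall x, In x l -> f x <= g x) -> rsum f l <= rsum g l.
Proof.
  induction l; simpl; intros H; [lra|].
  assert (f a <= g a) by auto. assert (rsum f l <= rsum g l) by auto. lra.
Qed.

Lemma rsum_nonneg {A} (f : A -> R) l : (forall x, In x l -> 0 <= f x) -> 0 <= rsum f l.
Proof.
  induction l; simpl; intros H; [lra|].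
  assert (0 <= f a) by auto. assert (0 <= rsum f l) by auto. lra.
Qed.

Lemma rsum_zero {A} (f : A -> R) l : (forall x, In x l -> f x = 0) -> rsum f l = 0.
Proof. induction l; simpl; intros H; [reflexivity|]. rewrite H, IHl; auto; ring. Qed.

Lemma rsum_ge_term {A} (f : A -> R) l a :
  (forall x, In x l -> 0 <= f x) -> In a l -> f a <= rsum f l.
Proof.
  induction l as [|b l IH]; simpl; intros H Ha; [destruct Ha|].
  destruct Ha as [<-|Ha].
  - assert (0 <= rsum f l) by (apply rsum_nonneg; auto). lra.
  - assert (0 <= f b) by auto. assert (f a <= rsum f l) by auto. lra.
Qed.

Lemma rsum_scal_l {A} (f : A -> R) l c : c * rsum f l = rsum (fun x => c * f x) l.
Proof. induction l; simpl; [ring | rewrite <- IHl; ring]. Qed.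

Lemma rsum_plus {A} (f g : A -> R) l : rsum (fun x => f x + g x) l = rsum f l + rsum g l.
Proof. induction l; simpl; [ring | rewrite IHl; ring]. Qed.

Lemma rsum_swap {A B} (g : A -> B -> R) l1 l2 :
  rsum (fun x => rsum (g x) l2) l1 = rsum (fun y => rsum (fun x => g x y) l1) l2.
Proof.
  induction l1; simpl.
  - induction l2; simpl; [reflexivity | rewrite <- IHl2; ring].
  - rewrite IHl1, <- rsum_plus. reflexivity.
Qed.

Lemma rsum_flat_map {A B} (f : B -> R) (g : A -> list B) l :
  rsum f (flat_map g l) = rsum (fun x => rsum f (g x)) l.
Proof. induction l; simpl; [reflexivity | now rewrite rsum_app, IHl]. Qed.

Lemma rsum_map {A B} (f : B -> R) (g : A -> B) l : rsum f (map g l) = rsum (fun x => f (g x)) l.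
Proof. induction l; simpl; [reflexivity | now rewrite IHl]. Qed.

Lemma rsum_le_incl {A} (f : A -> R) L G :
  NoDup L -> incl L G -> (forall x, In x G -> 0 <= f x) -> rsum f L <= rsum f G.
Proof.
  revert G; induction L as [|a L IH]; intros G HN Hi Hp; simpl.
  - now apply rsum_nonneg.
  - destruct (in_split a G (Hi a (or_introl eq_refl))) as (G1 & G2 & ->).
    inversion_clear HN as [|? ? HaL HL].
    assert (rsum f L <= rsum f (G1 ++ G2)).
    { apply IH; auto.
      - intros x Hx. assert (Hx' : In x (G1 ++ a :: G2)) by (apply Hi; now right).
        apply in_app_or in Hx'. apply in_or_app.
        destruct Hx' as [H|[<-|H]]; tauto.
      - intros x Hx; apply Hp. apply in_app_or in Hx; apply in_or_app; simpl; tauto. }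
    rewrite rsum_app in *. simpl. lra.
Qed.

Lemma rsum_seq (f : nat -> R) K : rsum f (seq 0 (S K)) = sum_f_R0 f K.
Proof. induction K; [simpl; ring | rewrite seq_S, rsum_app, IHK; simpl; ring]. Qed.

Lemma exp_le_compat x y : x <= y -> exp x <= exp y.
Proof. intros [H|H]; [left; now apply exp_increasing | now rewrite H]. Qed.

Lemma union_chernoff_bound {A B} (p : A -> R) (S : B -> A -> R) (W : list B) (L : list A)
    (a t : R) :
  0 <= t -> (forall v, In v L -> 0 <= p v) ->
  (forall v, In v L -> exists w, In w W /\ a <= S w v) ->
  rsum p L <= rsum (fun w => exp (- (t * a)) * rsum (fun v => p v * exp (t * S w v)) L) W.
Proof.
  intros Ht Hp HW.
  apply Rle_trans with (rsum (fun v => p v * rsum (fun w => exp (t * (S w v - a))) W) L).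
  - apply rsum_le. intros v Hv.
    destruct (HW v Hv) as (w & Hw & Ha).
    assert (1 <= rsum (fun w => exp (t * (S w v - a))) W).
    { rewrite <- exp_0. eapply Rle_trans; [|apply rsum_ge_term; [|exact Hw]].
      - apply exp_le_compat. apply Rmult_le_pos; lra.
      - intros; left; apply exp_pos. }
    specialize (Hp v Hv). nra.
  - rewrite (rsum_ext _ (fun v => rsum (fun w => p v * exp (t * (S w v - a))) W))
      by (intros; apply rsum_scal_l).
    rewrite rsum_swap. apply Req_le, rsum_ext. intros w _.
    rewrite rsum_scal_l. apply rsum_ext. intros v _.
    replace (t * (S w v - a)) with (- (t * a) + t * S w v) by ring.
    rewrite exp_plus. ring.
Qed.

Lemma exp_partial_sum_le x K : 0 <= x ->
  sum_f_R0 (fun i => / INR (fact i) * x ^ i) K <= exp x.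
Proof.
  intros Hx. unfold exp. destruct (exist_exp x) as [l Hl]; simpl.
  apply growing_ineq; [|exact Hl].
  intros k. cbn [sum_f_R0]. enough (0 <= / INR (fact (S k)) * x ^ S k) by lra.
  apply Rmult_le_pos; [left; apply Rinv_0_lt_compat, INR_fact_lt_0 | now apply pow_le].
Qed.

Lemma poisson_pmf_nonneg lam x : 0 <= lam -> 0 <= poisson_pmf lam x.
Proof.
  intros Hl. unfold poisson_pmf, Rdiv. repeat apply Rmult_le_pos.
  - left; apply exp_pos.
  - now apply pow_le.
  - left; apply Rinv_0_lt_compat, INR_fact_lt_0.
Qed.

Lemma cfg_prob_nonneg lam v : 0 <= lam -> 0 <= cfg_prob lam v.
Proof.
  intros Hl; induction v; simpl; [lra|].
  apply Rmult_le_pos; [now apply poisson_pmf_nonneg | exact IHv].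
Qed.

Lemma exp_mul_INR t n : exp (t * INR n) = exp t ^ n.
Proof.
  induction n; [simpl; now rewrite Rmult_0_r, exp_0|].
  rewrite S_INR, Rmult_plus_distr_l, Rmult_1_r, exp_plus, IHn. simpl. ring.
Qed.

Lemma poisson_mgf_truncated lam t K : 0 <= lam ->
  rsum (fun x => poisson_pmf lam x * exp (t * INR x)) (seq 0 (S K)) <= exp (lam * (exp t - 1)).
Proof.
  intros Hl.
  rewrite (rsum_ext _ (fun x => exp (- lam) * (/ INR (fact x) * (lam * exp t) ^ x))).
  2:{ intros x _. unfold poisson_pmf, Rdiv. rewrite exp_mul_INR, Rpow_mult_distr. ring. }
  rewrite <- rsum_scal_l, rsum_seq.
  replace (lam * (exp t - 1)) with (- lam + lam * exp t) by ring. rewrite exp_plus.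
  apply Rmult_le_compat_l; [left; apply exp_pos|].
  apply exp_partial_sum_le, Rmult_le_pos; [exact Hl | left; apply exp_pos].
Qed.

Fixpoint masked_sum {A} (P : A -> bool) (s : list A) (v : list nat) : nat :=
  match s, v with
  | a :: s', x :: v' => ((if P a then x else 0) + masked_sum P s' v')%nat
  | _, _ => 0%nat
  end.

Fixpoint grid (K m : nat) : list (list nat) :=
  match m with
  | O => [[]]
  | S m' => flat_map (fun x => map (cons x) (grid K m')) (seq 0 (S K))
  end.

Lemma in_grid K v : (forall x, In x v -> (x <= K)%nat) -> In v (grid K (length v)).
Proof.
  induction v as [|x v IH]; intros H; [now left|]. cbn [length grid].
  apply in_flat_map. exists x. split.
  - apply in_seq. specialize (H x (or_introl eq_refl)). lia.
  - apply in_map, IH. intros; apply H; simpl; auto.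
Qed.

Lemma grid_masked_mgf {A} lam t K (P : A -> bool) s : 0 <= lam ->
  rsum (fun v => cfg_prob lam v * exp (t * INR (masked_sum P s v))) (grid K (length s))
  <= exp (lam * (exp t - 1) * INR (length (filter P s))).
Proof.
  intros Hl. induction s as [|a s IH].
  { simpl. rewrite !Rmult_0_r, exp_0. lra. }
  cbn [length grid].
  set (G := rsum (fun v => cfg_prob lam v * exp (t * INR (masked_sum P s v))) (grid K (length s))).
  assert (HG : 0 <= G).
  { apply rsum_nonneg. intros; apply Rmult_le_pos;
      [now apply cfg_prob_nonneg | left; apply exp_pos]. }
  rewrite rsum_flat_map.
  rewrite (rsum_ext _ (fun x => poisson_pmf lam x * exp (t * INR (if P a then x else 0%nat)) * G)).
  2:{ intros x _. rewrite rsum_map. unfold G. rewrite rsum_scal_l. apply rsum_ext.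
      intros v _. simpl. rewrite plus_INR, Rmult_plus_distr_l, exp_plus. ring. }
  rewrite (rsum_ext _ (fun x => G * (poisson_pmf lam x * exp ((if P a then t else 0) * INR x))))
    by (intros x _; destruct (P a); simpl; rewrite ?Rmult_0_r, ?Rmult_0_l; ring).
  rewrite <- rsum_scal_l.
  cbn [filter]. destruct (P a); cbn [length].
  - rewrite S_INR, Rmult_plus_distr_l, Rmult_1_r, exp_plus.
    apply Rmult_le_compat; auto; [apply rsum_nonneg; intros; apply Rmult_le_pos;
      [now apply poisson_pmf_nonneg | left; apply exp_pos] | now apply poisson_mgf_truncated].
  - rewrite <- (Rmult_1_r (exp _)).
    apply Rmult_le_compat; auto; [apply rsum_nonneg; intros; apply Rmult_le_pos;
      [now apply poisson_pmf_nonneg | left; apply exp_pos] |].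
    eapply Rle_trans; [now apply poisson_mgf_truncated|]. rewrite exp_0. right.
    replace (lam * (1 - 1)) with 0 by ring. apply exp_0.
Qed.

Lemma masked_mgf_bound {A} lam t (P : A -> bool) s L : 0 <= lam -> NoDup L ->
  (forall v, In v L -> length v = length s) ->
  rsum (fun v => cfg_prob lam v * exp (t * INR (masked_sum P s v))) L
  <= exp (lam * (exp t - 1) * INR (length (filter P s))).
Proof.
  intros Hl HN HL.
  set (K := list_max (map list_max L)).
  eapply Rle_trans; [|apply (grid_masked_mgf lam t K P s Hl)].
  apply rsum_le_incl; [exact HN| |].
  - intros v Hv. rewrite <- (HL v Hv). apply in_grid. intros x Hx.
    assert (Hv' : (list_max v <= K)%nat).
    { apply (proj1 (Forall_forall _ _) (proj1 (list_max_le _ _) (Nat.le_refl K))).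
      now apply in_map. }
    enough (x <= list_max v)%nat by lia.
    exact (proj1 (Forall_forall _ _) (proj1 (list_max_le _ _) (Nat.le_refl _)) x Hx).
  - intros; apply Rmult_le_pos; [now apply cfg_prob_nonneg | left; apply exp_pos].
Qed.

Lemma NoDup_list_prod {A B} (l : list A) (l' : list B) :
  NoDup l -> NoDup l' -> NoDup (list_prod l l').
Proof.
  intros Hl Hl'. induction Hl as [|a l Ha Hl IH]; simpl; [constructor|].
  apply NoDup_app; auto.
  - apply NoDup_map_NoDup_ForallPairs; auto. intros x y _ _ E. congruence.
  - intros p Hp Hp'. apply in_map_iff in Hp as (b & <- & _).
    apply in_prod_iff in Hp' as [? _]. contradiction.
Qed.

Lemma NoDup_box n : NoDup (box n).
Proof.
  unfold box. rewrite <- list_prod_as_flat_map.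
  assert (Hz : NoDup (zrange n)).
  { apply NoDup_map_NoDup_ForallPairs; [|apply seq_NoDup]. intros a b _ _ E. lia. }
  now apply NoDup_list_prod.
Qed.

Lemma count_on_walk_box n w : (length (filter (on_walk w) (box n)) <= S (length w))%nat.
Proof.
  rewrite <- (length_visited origin w). apply NoDup_incl_length.
  - apply NoDup_filter, NoDup_box.
  - intros k Hk. apply filter_In in Hk as [_ Hk]. unfold on_walk in Hk.
    destruct (in_dec _ _ _); [assumption | discriminate].
Qed.

Lemma rsum_lookup_notin s v a x B : ~ In a B ->
  rsum (fun k => INR (lookup (a :: s) (x :: v) k)) B = rsum (fun k => INR (lookup s v k)) B.
Proof.
  intros Ha. apply rsum_ext. intros k Hk. simpl.
  destruct (site_eq_dec a k) as [->|]; [contradiction | reflexivity].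
Qed.

(* [lookup] reads the first occurrence of a site, so each site of [A] is charged at most once. *)
Lemma rsum_lookup_le_masked_sum (P : site -> bool) s v A : NoDup A ->
  (forall k, In k A -> P k = true) ->
  rsum (fun k => INR (lookup s v k)) A <= INR (masked_sum P s v).
Proof.
  revert v A; induction s as [|a s IH]; intros v A HN HP.
  - simpl. rewrite rsum_zero by reflexivity. lra.
  - destruct v as [|x v].
    { simpl. rewrite rsum_zero by reflexivity. lra. }
    cbn [masked_sum]. rewrite plus_INR.
    destruct (in_dec site_eq_dec a A) as [Ha|Ha].
    + destruct (in_split a A Ha) as (A1 & A2 & ->).
      assert (Hn : ~ In a (A1 ++ A2)) by apply (NoDup_remove_2 _ _ _ HN).
      assert (IH' := IH v (A1 ++ A2) (NoDup_remove_1 _ _ _ HN)).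
      rewrite (HP a) by (apply in_or_app; simpl; auto).
      replace (rsum (fun k => INR (lookup (a :: s) (x :: v) k)) (A1 ++ a :: A2))
        with (INR x + rsum (fun k => INR (lookup (a :: s) (x :: v) k)) (A1 ++ A2)).
      2:{ rewrite !rsum_app. simpl. destruct (site_eq_dec a a); [ring | congruence]. }
      rewrite rsum_lookup_notin by exact Hn.
      enough (rsum (fun k => INR (lookup s v k)) (A1 ++ A2) <= INR (masked_sum P s v)) by lra.
      apply IH'. intros k Hk; apply HP.
      apply in_app_or in Hk; apply in_or_app; simpl; tauto.
    + rewrite rsum_lookup_notin by exact Ha.
      assert (0 <= INR (if P a then x else 0%nat)) by apply pos_INR.
      enough (rsum (fun k => INR (lookup s v k)) A <= INR (masked_sum P s v)) by lra.
      now apply IH.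
Qed.

Fixpoint walks (N : nat) : list (list dir) :=
  match N with
  | O => [[]]
  | S N' => flat_map (fun w => map (fun d => d :: w) [East; West; North; South]) (walks N')
  end.

Lemma in_walks w : In w (walks (length w)).
Proof.
  induction w as [|d w IH]; simpl; [now left|].
  apply in_flat_map. exists w. split; [exact IH | destruct d; simpl; auto].
Qed.

Lemma length_in_walks N w : In w (walks N) -> length w = N.
Proof.
  revert w; induction N; simpl; intros w H.
  - now destruct H as [<-|[]].
  - apply in_flat_map in H as (w' & Hw' & H).
    destruct H as [<-|[<-|[<-|[<-|[]]]]]; simpl; f_equal; auto.
Qed.

Lemma rsum_walks_le (f : list dir -> R) N c :
  (forall w, In w (walks N) -> f w <= c) -> rsum f (walks N) <= 4 ^ N * c.
Proof.
  revert f c; induction N; intros f c Hf; simpl.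
  - rewrite Rmult_1_l. assert (f [] <= c) by (apply Hf; now left). lra.
  - rewrite rsum_flat_map. replace (4 * 4 ^ N * c) with (4 ^ N * (4 * c)) by ring.
    apply IHN. intros w Hw. simpl.
    assert (forall d, f (d :: w) <= c) by (intros d; apply Hf, in_flat_map; exists w;
      split; [exact Hw | destruct d; simpl; auto]).
    pose proof (H East); pose proof (H West); pose proof (H North); pose proof (H South). lra.
Qed.

Lemma heavy_animal_walk m n v A (t : R) : lattice_animal (S n) A -> weight (cfg m v) A > t ->
  exists w, In w (walks (2 * n)) /\ t <= INR (masked_sum (on_walk w) (box m) v).
Proof.
  intros Hanim Ht. destruct (animal_covering_walk n A Hanim) as (w & Hlw & Hc).
  exists w. split; [rewrite <- Hlw; apply in_walks|].
  enough (weight (cfg m v) A <= INR (masked_sum (on_walk w) (box m) v)) by lra.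
  apply rsum_lookup_le_masked_sum; [now destruct Hanim|].
  intros k Hk. unfold on_walk. destruct (in_dec _ _ _) as [|h]; [reflexivity|].
  exfalso; apply h, Hc, Hk.
Qed.

(* Since e > 2, (e^2 - 1)/e^3 <= 3/8, so the moment factor is at most e^(3/4 y (n+1));
   the 4^(2n) walks cost at most e^(1/4 y (n+1)) once y >= 60. *)
Lemma walk_chernoff_exponent_le lam y n : 0 <= lam -> exp 3 * lam <= y -> 60 <= y ->
  4 ^ (2 * n) * (exp (- (2 * (y * INR (S n)))) * exp (lam * (exp 2 - 1) * INR (S (2 * n))))
  <= exp (- (y * INR (S n))).
Proof.
  intros Hl H3 H60. set (m := INR (S n)).
  assert (Hm : 1 <= m) by (unfold m; rewrite S_INR; pose proof (pos_INR n); lra).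
  assert (H2n : INR (S (2 * n)) <= 2 * m) by (unfold m; rewrite !S_INR, mult_INR; simpl; lra).
  set (e := exp 1).
  assert (He : 2 < e) by (pose proof (exp_ineq1 1 ltac:(lra)); unfold e; lra).
  assert (E2 : exp 2 = e * e) by (unfold e; rewrite <- exp_plus; f_equal; lra).
  assert (E3 : exp 3 = e * e * e) by (unfold e; rewrite <- !exp_plus; f_equal; lra).
  assert (Hk : lam * (exp 2 - 1) <= 3 / 8 * y).
  { rewrite E2. rewrite E3 in H3.
    assert (0 <= (e - 2) * (3 * e * e - 2 * e - 4)) by (apply Rmult_le_pos; nra).
    nra. }
  assert (Hk0 : 0 <= lam * (exp 2 - 1)) by (rewrite E2; apply Rmult_le_pos; nra).
  assert (Hmoment : exp (lam * (exp 2 - 1) * INR (S (2 * n))) <= exp (3 / 4 * y * m)).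
  { apply exp_le_compat.
    apply Rle_trans with (3 / 8 * y * INR (S (2 * n))); [|nra].
    apply Rmult_le_compat_r; [apply pos_INR | exact Hk]. }
  assert (Hcount : 4 ^ (2 * n) <= exp (1 / 4 * y * m)).
  { unfold m. rewrite exp_mul_INR, pow_mult.
    apply Rle_trans with ((4 ^ 2) ^ S n).
    { change ((4 ^ 2) ^ S n) with (4 ^ 2 * (4 ^ 2) ^ n).
      pose proof (pow_le (4 ^ 2) n ltac:(lra)). nra. }
    apply pow_incr. pose proof (exp_ineq1_le (1 / 4 * y)). lra. }
  apply Rle_trans with (exp (1 / 4 * y * m) * (exp (- (2 * (y * m))) * exp (3 / 4 * y * m))).
  { apply Rmult_le_compat; [apply pow_le; lra | | exact Hcount |].
    - apply Rmult_le_pos; left; apply exp_pos.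
    - apply Rmult_le_compat_l; [left; apply exp_pos | exact Hmoment]. }
  rewrite <- !exp_plus. apply Req_le. f_equal. lra.
Qed.

Lemma no_lattice_animal_0 A : ~ lattice_animal 0 A.
Proof. intros (_ & Hlen & HO & _). destruct A; [exact HO | discriminate]. Qed.

Theorem lemma3p1 :
  exists rho : R, 0 < rho /\
    forall (lam : R), 0 < lam ->
    forall (y : R), Rmax (exp 3 * lam) rho <= y ->
    forall (n : nat) (L : list (list nat)),
      NoDup L ->
      (forall v, In v L ->
         length v = length (box n) /\ Nn_gt (cfg n v) n (y * INR n)) ->
      sum_prob lam L <= exp (- (y * INR n)).
Proof.
  exists 60. split; [lra|].
  intros lam Hl y Hy n L HN HL.
  assert (H3 : exp 3 * lam <= y) by (eapply Rle_trans; [apply Rmax_l | exact Hy]).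
  assert (H60 : 60 <= y) by (eapply Rle_trans; [apply Rmax_r | exact Hy]).
  destruct n as [|n].
  { destruct L as [|v L]; [left; apply exp_pos|].
    destruct (HL v (or_introl eq_refl)) as (_ & A & HA & _).
    contradiction (no_lattice_animal_0 A). }
  change (sum_prob lam L) with (rsum (cfg_prob lam) L).
  eapply Rle_trans.
  { apply (union_chernoff_bound _ (fun w v => INR (masked_sum (on_walk w) (box (S n)) v))
             (walks (2 * n)) L (y * INR (S n)) 2); [lra | intros; apply cfg_prob_nonneg; lra |].
    intros v Hv. destruct (HL v Hv) as (_ & A & HA & Hw).
    now apply (heavy_animal_walk _ n v A). }
  eapply Rle_trans; [|apply (walk_chernoff_exponent_le lam y n); lra].
  apply rsum_walks_le. intros w Hw.
  apply Rmult_le_compat_l; [left; apply exp_pos|].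
  eapply Rle_trans; [apply masked_mgf_bound; [lra | exact HN | apply HL]|].
  apply exp_le_compat, Rmult_le_compat_l.
  - apply Rmult_le_pos; [lra|]. pose proof (exp_ineq1_le 2). lra.
  - apply le_INR. rewrite <- (length_in_walks _ _ Hw). apply count_on_walk_box.
Qed.
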